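(* Let $\rho\in\mathbb R$ and let $\kappa_{\mathbf a}:\mathbb H_\rho\times\mathbb H_\rho\to\mathbb C$ be a positive semi-definite Dirichlet series kernel with coefficient matrix $\mathbf a=(a_{m,n})$. Then $\mathbf a$ is self-adjoint, i.e. $a_{m,n}=\overline{a_{n,m}}$ for all $m,n\ge1$.
   Context: $\mathbb H_\rho=\{\Re s>\rho\}$. $\kappa_{\mathbf a}(s,u)=\sum_{m,n\ge1}a_{m,n}m^{-s}n^{-\bar u}$ is a Dirichlet series kernel on $\mathbb H_\rho$ if $(s,u)\mapsto\kappa_{\mathbf a}(s,\bar u)$ is regularly convergent on $\mathbb H_\rho\times\mathbb H_\rho$ (the double series converges at each point and every row series $\sum_m$ and column series $\sum_n$ converges there). Positive semi-definite: all finite matrices $(\kappa_{\mathbf a}(s_i,s_j))$ are positive semi-definite. *)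

From Stdlib Require Import Reals.
From Coquelicot Require Import Coquelicot.
Open Scope R_scope.

(* n^{-s} for a natural n >= 1 and complex s:
   n^{-s} = exp(-s ln n) = e^{-Re s ln n} (cos(-Im s ln n) + i sin(-Im s ln n)). *)
Definition npow_neg (n : nat) (s : C) : C :=
  let t := ln (INR n) in
  (exp (- Re s * t) * cos (- Im s * t), exp (- Re s * t) * sin (- Im s * t)).

Fixpoint csum1 (N : nat) (f : nat -> C) : C :=
  match N with
  | O => 0%C
  | S N' => Cplus (csum1 N' f) (f N)
  end.

Fixpoint csum0 (k : nat) (f : nat -> C) : C :=
  match k with
  | O => 0%C
  | S k' => Cplus (csum0 k' f) (f k')
  end.

Definition in_H (rho : R) (s : C) : Prop := Re s > rho.

(* term a_{m,n} m^{-s} n^{-u} of the double Dirichlet series kappa_a(s, conj u) *)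
Definition dterm (a : nat -> nat -> C) (s u : C) (m n : nat) : C :=
  Cmult (a m n) (Cmult (npow_neg m s) (npow_neg n u)).

Definition series1_to (f : nat -> C) (L : C) : Prop :=
  forall eps : R, eps > 0 -> exists K : nat, forall N : nat, (K <= N)%nat ->
    Cmod (Cminus (csum1 N f) L) < eps.

(* The double series sum_{m,n>=1} b m n converges (in the sense of Pringsheim:
   rectangular partial sums S_{M,N} converge as M, N -> oo independently) to L. *)
Definition dseries_to (b : nat -> nat -> C) (L : C) : Prop :=
  forall eps : R, eps > 0 -> exists K : nat, forall M N : nat,
    (K <= M)%nat -> (K <= N)%nat ->
    Cmod (Cminus (csum1 M (fun m => csum1 N (fun n => b m n))) L) < eps.

Definition regularly_convergent (b : nat -> nat -> C) : Prop :=
  (exists L, dseries_to b L) /\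
  (forall m : nat, (1 <= m)%nat -> exists L, series1_to (fun n => b m n) L) /\
  (forall n : nat, (1 <= n)%nat -> exists L, series1_to (fun m => b m n) L).

Definition dirichlet_kernel (rho : R) (a : nat -> nat -> C) : Prop :=
  forall s u : C, in_H rho s -> in_H rho u -> regularly_convergent (dterm a s u).

Definition kernel_value (a : nat -> nat -> C) (s u L : C) : Prop :=
  dseries_to (dterm a s (Cconj u)) L.

Definition kernel_psd (rho : R) (a : nat -> nat -> C) : Prop :=
  forall (k : nat) (s : nat -> C) (K : nat -> nat -> C),
    (forall i, (i < k)%nat -> in_H rho (s i)) ->
    (forall i j, (i < k)%nat -> (j < k)%nat -> kernel_value a (s i) (s j) (K i j)) ->
    forall c : nat -> C,
      let q := csum0 k (fun i => csum0 k (fun j =>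
                 Cmult (Cmult (Cconj (c i)) (c j)) (K i j))) in
      Im q = 0 /\ 0 <= Re q.

From Stdlib Require Import Reals Lra Lia IndefiniteDescription.
From Coquelicot Require Import Coquelicot.

(* Testing positive semi-definiteness at two real points s, t > rho with the
   vectors (1, 1) and (1, i) gives kappa(s, t) = conj kappa(t, s).  Hence the
   double Dirichlet series with coefficients b_{m,n} = a_{m,n} - conj a_{n,m}
   sums to 0 at every real point of H_rho x H_rho, and its rows converge there.
   Summing rows first reduces b = 0 to the uniqueness theorem for ordinary
   Dirichlet series, used twice: if sum_m c_m m^{-s} = 0 for all real s > rho,
   then c = 0, since for the first nonzero c_M the rescaled sum
   M^s sum_m c_m m^{-s} tends to c_M as s -> +oo. *)

Implicit Types (f g r : nat -> C) (L : C).

Lemma csum1_ext N f g :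
  (forall m, (1 <= m <= N)%nat -> f m = g m) -> csum1 N f = csum1 N g.
Proof.
induction N as [|N IH]; intros Hfg; simpl; [reflexivity|].
rewrite IH by (intros; apply Hfg; lia); rewrite Hfg by lia; reflexivity.
Qed.

Lemma csum1_eq0 N f : (forall m, (1 <= m <= N)%nat -> f m = 0%C) -> csum1 N f = 0%C.
Proof.
induction N as [|N IH]; intros Hf; simpl; [reflexivity|].
rewrite IH by (intros; apply Hf; lia); rewrite Hf by lia; ring.
Qed.

Lemma csum1_plus N f g :
  csum1 N (fun m => Cplus (f m) (g m)) = Cplus (csum1 N f) (csum1 N g).
Proof. induction N as [|N IH]; simpl; [|rewrite IH]; ring. Qed.

Lemma csum1_minus N f g :
  csum1 N (fun m => Cminus (f m) (g m)) = Cminus (csum1 N f) (csum1 N g).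
Proof. induction N as [|N IH]; simpl; [|rewrite IH]; ring. Qed.

Lemma csum1_scal N c f : csum1 N (fun m => Cmult c (f m)) = Cmult c (csum1 N f).
Proof. induction N as [|N IH]; simpl; [|rewrite IH]; ring. Qed.

Lemma csum1_conj N f : csum1 N (fun m => Cconj (f m)) = Cconj (csum1 N f).
Proof.
induction N as [|N IH]; simpl.
- apply injective_projections; simpl; ring.
- rewrite IH, Cplus_conj; reflexivity.
Qed.

Lemma csum1_swap M N (t : nat -> nat -> C) :
  csum1 M (fun m => csum1 N (fun n => t m n))
  = csum1 N (fun n => csum1 M (fun m => t m n)).
Proof.
induction M as [|M IH]; simpl.
- symmetry; apply csum1_eq0; reflexivity.
- rewrite IH, <- csum1_plus; reflexivity.
Qed.

Lemma Cmod_minus_minus_le (A B : C) L1 L2 :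
  Cmod (Cminus (Cminus A B) (Cminus L1 L2)) <= Cmod (Cminus A L1) + Cmod (Cminus B L2).
Proof.
replace (Cminus (Cminus A B) (Cminus L1 L2))
  with (Cplus (Cminus A L1) (Copp (Cminus B L2))) by ring.
rewrite <- (Cmod_opp (Cminus B L2)); apply Cmod_triangle.
Qed.

Lemma series1_to_ext f g L :
  (forall m, (1 <= m)%nat -> f m = g m) -> series1_to f L -> series1_to g L.
Proof.
intros Hfg Hf eps Heps; destruct (Hf eps Heps) as [K HK]; exists K; intros N HN.
rewrite <- (csum1_ext N f g) by (intros; apply Hfg; lia); auto.
Qed.

Lemma series1_to_scal (c : C) f L :
  series1_to f L -> series1_to (fun m => Cmult c (f m)) (Cmult c L).
Proof.
intros Hf eps Heps.
assert (Hc : 0 < Cmod c + 1) by (pose proof (Cmod_ge_0 c); lra).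
destruct (Hf (eps / (Cmod c + 1))) as [K HK]; [apply Rdiv_lt_0_compat; lra|].
exists K; intros N HN; rewrite csum1_scal.
replace (Cminus (Cmult c (csum1 N f)) (Cmult c L)) with (Cmult c (Cminus (csum1 N f) L))
  by ring.
rewrite Cmod_mult.
apply Rle_lt_trans with ((Cmod c + 1) * Cmod (Cminus (csum1 N f) L)).
- pose proof (Cmod_ge_0 (Cminus (csum1 N f) L)); nra.
- specialize (HK N HN).
  replace eps with ((Cmod c + 1) * (eps / (Cmod c + 1))) by (field; lra).
  apply Rmult_lt_compat_l; assumption.
Qed.

Lemma series1_to_plus f g L1 L2 : series1_to f L1 -> series1_to g L2 ->
  series1_to (fun m => Cplus (f m) (g m)) (Cplus L1 L2).
Proof.
intros Hf Hg eps Heps.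
destruct (Hf (eps / 2)) as [K1 H1]; [lra|]; destruct (Hg (eps / 2)) as [K2 H2]; [lra|].
exists (max K1 K2); intros N HN; rewrite csum1_plus.
replace (Cminus (Cplus (csum1 N f) (csum1 N g)) (Cplus L1 L2))
  with (Cplus (Cminus (csum1 N f) L1) (Cminus (csum1 N g) L2)) by ring.
eapply Rle_lt_trans; [apply Cmod_triangle|].
specialize (H1 N ltac:(lia)); specialize (H2 N ltac:(lia)); lra.
Qed.

Lemma series1_to_minus f g L1 L2 : series1_to f L1 -> series1_to g L2 ->
  series1_to (fun m => Cminus (f m) (g m)) (Cminus L1 L2).
Proof.
intros Hf Hg.
replace (Cminus L1 L2) with (Cplus L1 (Cmult (RtoC (-1)) L2)) by ring.
eapply series1_to_ext; [|apply (series1_to_plus _ _ _ _ Hf (series1_to_scal _ _ _ Hg))].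
intros m _; simpl; ring.
Qed.

Lemma series1_to_conj f L :
  series1_to f L -> series1_to (fun m => Cconj (f m)) (Cconj L).
Proof.
intros Hf eps Heps; destruct (Hf eps Heps) as [K HK]; exists K; intros N HN.
rewrite csum1_conj, <- Cminus_conj, Cmod_conj; auto.
Qed.

Lemma finite_upper_bound (g : nat -> R) K : exists B, forall m, (m <= K)%nat -> g m <= B.
Proof.
induction K as [|K [B HB]].
- exists (g 0%nat); intros m Hm; replace m with 0%nat by lia; lra.
- exists (Rmax B (g (S K))); intros m Hm.
  destruct (Nat.eq_dec m (S K)) as [->|Hne]; [apply Rmax_r|].
  eapply Rle_trans; [apply HB; lia|apply Rmax_l].
Qed.

Lemma series1_to_bounded_terms f L :
  series1_to f L -> exists B, forall m, (1 <= m)%nat -> Cmod (f m) <= B.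
Proof.
intros Hf; destruct (Hf 1 ltac:(lra)) as [K HK].
destruct (finite_upper_bound (fun m => Cmod (f m)) K) as [B HB].
exists (Rmax B 2); intros [|m] Hm; [lia|].
destruct (Compare_dec.le_lt_dec (S m) K) as [Hle|Hlt].
- eapply Rle_trans; [apply HB, Hle|apply Rmax_l].
- eapply Rle_trans; [|apply Rmax_r].
  replace (f (S m)) with (Cplus (Cminus (csum1 (S m) f) L) (Copp (Cminus (csum1 m f) L)))
    by (simpl; ring).
  eapply Rle_trans; [apply Cmod_triangle|]; rewrite Cmod_opp.
  pose proof (HK (S m) ltac:(lia)); pose proof (HK m ltac:(lia)); lra.
Qed.

Lemma dseries_to_ext (t u : nat -> nat -> C) L :
  (forall m n, (1 <= m)%nat -> (1 <= n)%nat -> t m n = u m n) ->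
  dseries_to t L -> dseries_to u L.
Proof.
intros Htu Ht eps Heps; destruct (Ht eps Heps) as [K HK]; exists K; intros M N HM HN.
rewrite <- (csum1_ext M (fun m => csum1 N (fun n => t m n))); [apply HK; assumption|].
intros m Hm; apply csum1_ext; intros n Hn; apply Htu; lia.
Qed.

Lemma dseries_to_minus (t u : nat -> nat -> C) L1 L2 : dseries_to t L1 -> dseries_to u L2 ->
  dseries_to (fun m n => Cminus (t m n) (u m n)) (Cminus L1 L2).
Proof.
intros Ht Hu eps Heps.
destruct (Ht (eps / 2)) as [K1 H1]; [lra|]; destruct (Hu (eps / 2)) as [K2 H2]; [lra|].
exists (max K1 K2); intros M N HM HN.
rewrite (csum1_ext M _
  (fun m => Cminus (csum1 N (fun n => t m n)) (csum1 N (fun n => u m n))))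
  by (intros; apply csum1_minus).
rewrite csum1_minus; eapply Rle_lt_trans; [apply Cmod_minus_minus_le|].
specialize (H1 M N ltac:(lia) ltac:(lia)); specialize (H2 M N ltac:(lia) ltac:(lia)); lra.
Qed.

Lemma dseries_to_adjoint (t : nat -> nat -> C) L :
  dseries_to t L -> dseries_to (fun m n => Cconj (t n m)) (Cconj L).
Proof.
intros Ht eps Heps; destruct (Ht eps Heps) as [K HK]; exists K; intros M N HM HN.
rewrite (csum1_ext M _ (fun m => Cconj (csum1 N (fun n => t n m))))
  by (intros; apply csum1_conj).
rewrite csum1_conj, <- Cminus_conj, Cmod_conj, <- csum1_swap; auto.
Qed.

Lemma series1_to_csum1 M (t : nat -> nat -> C) r :
  (forall m, (1 <= m)%nat -> series1_to (t m) (r m)) ->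
  series1_to (fun n => csum1 M (fun m => t m n)) (csum1 M r).
Proof.
intros Ht; induction M as [|M IH]; intros eps Heps.
- exists 0%nat; intros N _; simpl; rewrite csum1_eq0 by reflexivity.
  replace (Cminus 0 0) with (RtoC 0) by ring; rewrite Cmod_0; lra.
- exact (series1_to_plus _ _ _ _ IH (Ht (S M) ltac:(lia)) eps Heps).
Qed.

Lemma series1_to_row_sums (t : nat -> nat -> C) L r : dseries_to t L ->
  (forall m, (1 <= m)%nat -> series1_to (t m) (r m)) -> series1_to r L.
Proof.
intros Ht Hr eps Heps.
destruct (Ht (eps / 2)) as [K HK]; [lra|]; exists K; intros M HM.
destruct (series1_to_csum1 M t r Hr (eps / 2)) as [K' HK']; [lra|].
specialize (HK M (max K K') HM ltac:(lia)); specialize (HK' (max K K') ltac:(lia)).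
rewrite csum1_swap in HK.
set (S := csum1 (max K K') (fun n => csum1 M (fun m => t m n))) in *.
replace (Cminus (csum1 M r) L) with (Cplus (Copp (Cminus S (csum1 M r))) (Cminus S L))
  by ring.
eapply Rle_lt_trans; [apply Cmod_triangle|]; rewrite Cmod_opp; lra.
Qed.

Lemma Cconj_RtoC x : Cconj (RtoC x) = RtoC x.
Proof. apply injective_projections; simpl; ring. Qed.

Lemma npow_neg_RtoC n x : npow_neg n (RtoC x) = RtoC (Rpower (INR n) (- x)).
Proof.
unfold npow_neg, Rpower, RtoC; simpl.
rewrite Ropp_0, !Rmult_0_l, cos_0, sin_0, Rmult_1_r, Rmult_0_r; reflexivity.
Qed.

Lemma Rpower_opp_plus_INR n x k : (1 <= n)%nat ->
  Rpower (INR n) (- (x + INR k)) = Rpower (INR n) (- x) * (/ INR n) ^ k.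
Proof.
intros Hn; assert (0 < INR n) by (apply lt_0_INR; lia).
rewrite Ropp_plus_distr, Rpower_plus, (Rpower_Ropp _ (INR k)), Rpower_pow, pow_inv
  by assumption.
reflexivity.
Qed.

Lemma inv_pow_le_telescope X Y k : 1 <= X <= Y ->
  (/ (Y + 1)) ^ S (S k) <= (/ (X + 1)) ^ k * (/ Y - / (Y + 1)).
Proof.
intros HXY.
assert (Hsq : (/ (Y + 1)) ^ 2 <= / Y - / (Y + 1)).
{ replace (/ Y - / (Y + 1)) with (/ (Y * (Y + 1))) by (field; lra).
  rewrite pow_inv; apply Rinv_le_contravar; nra. }
assert (Hk : (/ (Y + 1)) ^ k <= (/ (X + 1)) ^ k).
{ apply pow_incr; split; [apply Rlt_le, Rinv_0_lt_compat; lra|].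
  apply Rinv_le_contravar; lra. }
replace (S (S k)) with (k + 2)%nat by lia; rewrite pow_add.
apply Rmult_le_compat; auto; apply pow_le, Rlt_le, Rinv_0_lt_compat; lra.
Qed.

(* [h m] stands for [c m * m^{-s0}]: then the Dirichlet series at [s0 + k + 2]
   is [sum_m h m * (1/m)^(k+2)], and convergence at [s0] bounds [h]. *)
Section BoundedDirichletCoefficients.

Variables (h : nat -> C) (B : R).
Hypothesis h_bounded : forall m, (1 <= m)%nat -> Cmod (h m) <= B.

Let term (k m : nat) : C := Cmult (h m) (RtoC ((/ INR m) ^ S (S k))).

Hypothesis term_series : forall k, series1_to (term k) 0%C.

Lemma dirichlet_bound_nonneg : 0 <= B.
Proof. eapply Rle_trans; [apply Cmod_ge_0|apply (h_bounded 1%nat); lia]. Qed.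

Lemma Cmod_term m k : (1 <= m)%nat ->
  Cmod (term k m) = Cmod (h m) * (/ INR m) ^ S (S k).
Proof.
intros Hm; unfold term; rewrite Cmod_mult, Cmod_R, Rabs_pos_eq; [reflexivity|].
apply pow_le, Rlt_le, Rinv_0_lt_compat, lt_0_INR; lia.
Qed.

Section FirstNonzeroCoefficient.

Variable M : nat.
Hypothesis M_pos : (1 <= M)%nat.
Hypothesis h_below_M : forall m, (1 <= m < M)%nat -> h m = 0%C.

Lemma term_tail_le k j :
  Cmod (Cminus (csum1 (M + j) (term k)) (term k M))
  <= B * (/ (INR M + 1)) ^ k * (/ INR M - / INR (M + j)).
Proof.
induction j as [|j IH].
- destruct M as [|M']; [lia|]; rewrite Nat.add_0_r; simpl.
  rewrite (csum1_eq0 M' (term k))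
    by (intros m Hm; unfold term; rewrite h_below_M by lia; ring).
  replace (Cminus (Cplus 0 (term k (S M'))) (term k (S M'))) with (RtoC 0) by ring.
  rewrite Cmod_0, Rminus_diag, Rmult_0_r; lra.
- rewrite Nat.add_succ_r; simpl csum1.
  replace (Cminus (Cplus (csum1 (M + j) (term k)) (term k (S (M + j)))) (term k M))
    with (Cplus (Cminus (csum1 (M + j) (term k)) (term k M)) (term k (S (M + j)))) by ring.
  eapply Rle_trans; [apply Cmod_triangle|].
  rewrite Cmod_term, S_INR by lia.
  set (Y := INR (M + j)).
  assert (HY : 1 <= INR M <= Y) by (split; [apply (le_INR 1)|apply le_INR]; lia).
  pose proof (inv_pow_le_telescope _ _ k HY) as Htel.
  assert (0 <= (/ (Y + 1)) ^ S (S k)) by (apply pow_le, Rlt_le, Rinv_0_lt_compat; lra).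
  assert (Cmod (h (S (M + j))) * (/ (Y + 1)) ^ S (S k) <= B * (/ (Y + 1)) ^ S (S k))
    by (apply Rmult_le_compat_r; [assumption|apply h_bounded; lia]).
  pose proof dirichlet_bound_nonneg.
  assert (B * (/ (Y + 1)) ^ S (S k) <= B * ((/ (INR M + 1)) ^ k * (/ Y - / (Y + 1))))
    by (apply Rmult_le_compat_l; assumption).
  change (INR (M + j)) with Y in IH; lra.
Qed.

Lemma first_coef_bound k :
  Cmod (h M) <= B * INR M * (INR M / (INR M + 1)) ^ k.
Proof.
set (X := INR M); assert (HX : 1 <= X) by (apply (le_INR 1); lia).
pose proof dirichlet_bound_nonneg as HB.
assert (HBk : 0 <= B * (/ (X + 1)) ^ k)
  by (apply Rmult_le_pos, pow_le, Rlt_le, Rinv_0_lt_compat; lra).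
assert (Hterm : Cmod (h M) * (/ X) ^ S (S k) <= B * (/ (X + 1)) ^ k * / X).
{ apply Rle_plus_epsilon; intros eps Heps.
  destruct (term_series k eps Heps) as [K HK]; specialize (HK (M + K)%nat ltac:(lia)).
  set (S := csum1 (M + K) (term k)) in *.
  rewrite <- Cmod_term by assumption.
  replace (term k M) with (Cplus (Cminus S 0) (Copp (Cminus S (term k M)))) by ring.
  eapply Rle_trans; [apply Cmod_triangle|]; rewrite Cmod_opp.
  pose proof (term_tail_le k K) as Htail; fold S X in Htail.
  assert (0 < / INR (M + K)) by (apply Rinv_0_lt_compat, lt_0_INR; lia).
  assert (B * (/ (X + 1)) ^ k * (/ X - / INR (M + K)) <= B * (/ (X + 1)) ^ k * / X)
    by (apply Rmult_le_compat_l; lra).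
  lra. }
replace (B * X * (X / (X + 1)) ^ k)
  with (B * (/ (X + 1)) ^ k * / X * X ^ S (S k)).
- replace (Cmod (h M)) with (Cmod (h M) * (/ X) ^ S (S k) * X ^ S (S k)).
  + apply Rmult_le_compat_r; [apply pow_le; lra|assumption].
  + rewrite Rmult_assoc, <- Rpow_mult_distr, Rinv_l, pow1 by lra; ring.
- unfold Rdiv; rewrite Rpow_mult_distr; simpl; field; lra.
Qed.

Lemma first_coef_eq0 : h M = 0%C.
Proof.
set (X := INR M); assert (HX : 1 <= X) by (apply (le_INR 1); lia).
pose proof dirichlet_bound_nonneg as HB.
set (q := X / (X + 1)).
assert (Hq : 0 <= q < 1).
{ unfold q; split; [apply Rle_mult_inv_pos; lra|].
  apply Rmult_lt_reg_r with (X + 1); [lra|]; unfold Rdiv; rewrite Rmult_assoc, Rinv_l; lra. }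
apply Cmod_eq_0, Rle_antisym; [|apply Cmod_ge_0].
apply Rle_plus_epsilon; intros eps Heps.
destruct (pow_lt_1_zero q ltac:(rewrite Rabs_pos_eq; lra) (eps / (B * X + 1)))
  as [k Hk]; [apply Rdiv_lt_0_compat; nra|].
specialize (Hk k (le_n k)); rewrite Rabs_pos_eq in Hk by (apply pow_le; lra).
eapply Rle_trans; [apply (first_coef_bound k)|]; fold X q.
assert (Hqk : 0 <= q ^ k) by (apply pow_le; lra).
apply Rle_trans with ((B * X + 1) * (eps / (B * X + 1))); [|right; field; nra].
apply Rle_trans with ((B * X + 1) * q ^ k); [nra|].
apply Rmult_le_compat_l; nra.
Qed.

End FirstNonzeroCoefficient.

Lemma bounded_dirichlet_coef_eq0 m : (1 <= m)%nat -> h m = 0%C.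
Proof.
assert (Hall : forall N m, (1 <= m <= N)%nat -> h m = 0%C).
{ induction N as [|N IH]; intros m' Hm'; [lia|].
  destruct (Nat.eq_dec m' (S N)) as [->|Hne]; [|apply IH; lia].
  apply first_coef_eq0; [lia|intros; apply IH; lia]. }
intros Hm; apply (Hall m); lia.
Qed.

End BoundedDirichletCoefficients.

Lemma npow_neg_RtoC_neq0 n x : npow_neg n (RtoC x) <> 0%C.
Proof.
rewrite npow_neg_RtoC; intros H0.
apply RtoC_inj in H0; revert H0; apply Rgt_not_eq, exp_pos.
Qed.

Lemma dirichlet_series_coef_eq0 rho c :
  (forall s, s > rho -> series1_to (fun m => Cmult (c m) (npow_neg m (RtoC s))) 0%C) ->
  forall m, (1 <= m)%nat -> c m = 0%C.
Proof.
intros Hc.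
set (s0 := rho + 1).
destruct (series1_to_bounded_terms _ _ (Hc s0 ltac:(unfold s0; lra))) as [B HB].
assert (Hh : forall m, (1 <= m)%nat -> Cmult (c m) (npow_neg m (RtoC s0)) = 0%C).
{ apply (bounded_dirichlet_coef_eq0 _ B); [exact HB|intros k].
  eapply series1_to_ext; [|apply (Hc (s0 + INR (S (S k)))); pose proof (pos_INR (S (S k)));
                            unfold s0; lra].
  intros m Hm; rewrite !npow_neg_RtoC, Rpower_opp_plus_INR, RtoC_mult by assumption; ring. }
intros m Hm.
transitivity (Cmult (Cmult (c m) (npow_neg m (RtoC s0))) (Cinv (npow_neg m (RtoC s0)))).
- rewrite <- Cmult_assoc, Cinv_r by apply npow_neg_RtoC_neq0; ring.
- rewrite Hh by assumption; ring.
Qed.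

Lemma dirichlet_double_coef_eq0 rho b :
  (forall s t, s > rho -> t > rho ->
     dseries_to (dterm b (RtoC s) (RtoC t)) 0%C /\
     forall m, (1 <= m)%nat -> exists L, series1_to (dterm b (RtoC s) (RtoC t) m) L) ->
  forall m n, (1 <= m)%nat -> (1 <= n)%nat -> b m n = 0%C.
Proof.
intros Hb m n Hm Hn.
apply (dirichlet_series_coef_eq0 rho (b m)); [intros t Ht|assumption].
set (s0 := rho + 1).
assert (Hrow : exists r, forall m', (1 <= m')%nat ->
          series1_to (fun n' => Cmult (b m' n') (npow_neg n' (RtoC t))) (r m')).
{ apply (functional_choice (fun m' L => (1 <= m')%nat ->
          series1_to (fun n' => Cmult (b m' n') (npow_neg n' (RtoC t))) L)).
  intros m'; destruct (Compare_dec.le_lt_dec 1 m') as [Hm'|Hm']; [|exists 0%C; lia].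
  destruct (proj2 (Hb s0 t ltac:(unfold s0; lra) Ht) m' Hm') as [L HL].
  set (p := npow_neg m' (RtoC s0)).
  exists (Cmult (Cinv p) L); intros _.
  eapply series1_to_ext; [|apply (series1_to_scal (Cinv p) _ _ HL)].
  intros n' _; unfold dterm; fold p.
  transitivity (Cmult (Cmult (Cinv p) p) (Cmult (b m' n') (npow_neg n' (RtoC t)))); [ring|].
  rewrite Cinv_l by apply npow_neg_RtoC_neq0; ring. }
destruct Hrow as [r Hr].
assert (Hr0 : r m = 0%C).
{ apply (dirichlet_series_coef_eq0 rho r); [intros s Hs|assumption].
  eapply series1_to_ext;
    [|apply (series1_to_row_sums (dterm b (RtoC s) (RtoC t))); [apply (Hb s t Hs Ht)|]].
  - intros m' _; apply Cmult_comm.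
  - intros m' Hm'; eapply series1_to_ext;
      [|apply (series1_to_scal (npow_neg m' (RtoC s)) _ _ (Hr m' Hm'))].
    intros n' _; unfold dterm; ring. }
rewrite <- Hr0; apply Hr, Hm.
Qed.

Lemma hermitian_form2_real_adjoint (K : nat -> nat -> C) :
  (forall c : nat -> C,
     Im (csum0 2 (fun i => csum0 2 (fun j =>
           Cmult (Cmult (Cconj (c i)) (c j)) (K i j)))) = 0) ->
  K 0%nat 1%nat = Cconj (K 1%nat 0%nat).
Proof.
intros HK.
pose proof (HK (fun i => match i with O => RtoC 1 | _ => RtoC 0 end)) as E0.
pose proof (HK (fun i => match i with O => RtoC 0 | _ => RtoC 1 end)) as E1.
pose proof (HK (fun _ => RtoC 1)) as E2.
pose proof (HK (fun i => match i with O => RtoC 1 | _ => Ci end)) as E3.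
simpl in E0, E1, E2, E3.
destruct (K 0%nat 0%nat) as [x00 y00], (K 0%nat 1%nat) as [x01 y01],
         (K 1%nat 0%nat) as [x10 y10], (K 1%nat 1%nat) as [x11 y11].
simpl in E0, E1, E2, E3.
apply injective_projections; simpl; nra.
Qed.

Lemma kernel_value_RtoC_adjoint rho a s t L1 L2 :
  dirichlet_kernel rho a -> kernel_psd rho a -> s > rho -> t > rho ->
  kernel_value a (RtoC s) (RtoC t) L1 -> kernel_value a (RtoC t) (RtoC s) L2 ->
  L1 = Cconj L2.
Proof.
intros Hker Hpsd Hs Ht H1 H2.
assert (Hdiag : forall x, x > rho -> exists L, kernel_value a (RtoC x) (RtoC x) L).
{ intros x Hx; unfold kernel_value; rewrite Cconj_RtoC.
  apply (proj1 (Hker (RtoC x) (RtoC x) Hx Hx)). }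
destruct (Hdiag s Hs) as [L0 H0], (Hdiag t Ht) as [L3 H3].
set (pt := fun i : nat => match i with O => RtoC s | _ => RtoC t end).
set (K := fun i j : nat => match i, j with
                            | O, O => L0 | O, _ => L1 | _, O => L2 | _, _ => L3 end).
apply (hermitian_form2_real_adjoint K); intros c.
apply (Hpsd 2%nat pt K).
- intros [|[|i]] Hi; [exact Hs|exact Ht|lia].
- intros [|[|i]] [|[|j]] Hi Hj; try lia; assumption.
Qed.

Lemma dterm_sub_adjoint_RtoC a s t m n :
  dterm (fun m' n' => Cminus (a m' n') (Cconj (a n' m'))) (RtoC s) (RtoC t) m n
  = Cminus (dterm a (RtoC s) (RtoC t) m n) (Cconj (dterm a (RtoC t) (RtoC s) n m)).
Proof.
unfold dterm; rewrite !npow_neg_RtoC, !Cmult_conj, !Cconj_RtoC; ring.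
Qed.

Theorem lemma2p4 (rho : R) (a : nat -> nat -> C) :
  dirichlet_kernel rho a -> kernel_psd rho a ->
  forall m n : nat, (1 <= m)%nat -> (1 <= n)%nat -> a m n = Cconj (a n m).
Proof.
intros Hker Hpsd m n Hm Hn.
enough (Hb : Cminus (a m n) (Cconj (a n m)) = 0%C).
{ transitivity (Cplus (Cminus (a m n) (Cconj (a n m))) (Cconj (a n m))); [ring|].
  rewrite Hb; ring. }
revert m n Hm Hn; apply (dirichlet_double_coef_eq0 rho); intros s t Hs Ht.
assert (Hreg : forall x y, x > rho -> y > rho ->
                 regularly_convergent (dterm a (RtoC x) (RtoC y)))
  by (intros x y Hx Hy; apply Hker; assumption).
destruct (Hreg s t Hs Ht) as [[L1 H1] [Hrows _]], (Hreg t s Ht Hs) as [[L2 H2] [_ Hcols]].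
assert (HL : L1 = Cconj L2).
{ apply (kernel_value_RtoC_adjoint rho a s t); try assumption;
    unfold kernel_value; rewrite Cconj_RtoC; assumption. }
split.
- replace (RtoC 0) with (Cminus L1 (Cconj L2)) by (rewrite HL; ring).
  eapply dseries_to_ext; [|apply (dseries_to_minus _ _ _ _ H1 (dseries_to_adjoint _ _ H2))].
  intros m' n' _ _; symmetry; apply dterm_sub_adjoint_RtoC.
- intros m' Hm'.
  destruct (Hrows m' Hm') as [R HR], (Hcols m' Hm') as [L HL'].
  exists (Cminus R (Cconj L)).
  eapply series1_to_ext; [|apply (series1_to_minus _ _ _ _ HR (series1_to_conj _ _ HL'))].
  intros n' _; symmetry; apply dterm_sub_adjoint_RtoC.
Qed.
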